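(* Let an ILP with data $\mathcal D^p=\mathbf A^f\times\mathbf A^n\times\mathbf B^f\times\mathbf B^n\times\mathbf a\times\mathbf b\times\mathbf c^f\times\mathbf c^n$ be given. A point $x=(x^f,x^n)$ is a weakly optimal solution of the ILP if and only if $x$ is a weakly feasible solution of the ILP and there exists a sign vector $\sigma\in\{-1,1\}^k$ such that the following system (the testing system in orthant $\sigma$) in the unknowns $A'^f,A'^n,a',B'^f,B'^n,b',y^f\in\mathbb R^k,y^n\in\mathbb R^\ell$ is feasible: $$A'^f\in\operatorname{diag}(y^f)\mathbf A^f,\quad A'^n\in\operatorname{diag}(y^f)\mathbf A^n,\quad a'\in\operatorname{diag}(y^f)\mathbf a,$$ $$B'^f\in\operatorname{diag}(y^n)\mathbf B^f,\quad B'^n\in\operatorname{diag}(y^n)\mathbf B^n,\quad b'\in\operatorname{diag}(y^n)\mathbf b,$$ $$A'^fx^f+A'^nx^n=a',\qquad B'^fx^f+B'^nx^n=b',$$ $$(e^TA'^f+e^TB'^f)^T\in\mathbf c^f,$$ $$(e^TA'^n+e^TB'^n)_i\in\mathbf c^n_i\ \text{ for all } i \text{ with } x^n_i>0,\qquad (e^TA'^n+e^TB'^n)_i\le\overline c^n_i\ \text{ for all } i\text{ with } x^n_i=0,$$ $$y^n\ge 0,\qquad \operatorname{diag}(\sigma)y^f\ge 0.$$ (For fixed $x$ and $\sigma$ this is a linear system, since the sign of each component of $y^f$ and $y^n$ is fixed.) Moreover, if so, a scenario witnessing weak optimality of $x$ is $(A^f,A^n,B^f,B^n,a,b,c^f,c^n)$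 with $c^f=(e^TA'^f+e^TB'^f)^T$, where for each $i=1,\dots,k$: if $y^f_i\neq0$ then $(A^f_i,A^n_i,a_i)=\frac1{y^f_i}(A'^f_i,A'^n_i,a'_i)$, otherwise $(A^f_i,A^n_i,a_i)$ is any solution of $A^f_ix^f+A^n_ix^n=a_i$, $A^f_i\in\mathbf A^f_i$, $A^n_i\in\mathbf A^n_i$, $a_i\in\mathbf a_i$; for each $i=1,\dots,\ell$: if $y^n_i>0$ then $(B^f_i,B^n_i,b_i)=\frac1{y^n_i}(B'^f_i,B'^n_i,b'_i)$, otherwise $(B^f_i,B^n_i,b_i)$ is any solution of $B^f_ix^f+B^n_ix^n\ge b_i$, $B^f_i\in\mathbf B^f_i$, $B^n_i\in\mathbf B^n_i$, $b_i\in\mathbf b_i$; and for each $i=1,\dots,n$, $c^n_i=\overline c^n_i$ if $x^n_i=0$ and $c^n_i=(e^TA'^n+e^TB'^n)_i$ otherwise.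
   Context: Interval matrix: for real matrices $\underline A\le\overline A$ (entrywise) of the same size, $\mathbf A=[\underline A,\overline A]=\{A:\underline A\le A\le\overline A\}$; interval vectors are defined analogously, and $\mathbb{IR}^{p\times q}$ denotes the set of $p\times q$ interval matrices. Data of an interval linear program (ILP): interval matrices $\mathbf A^f\in\mathbb{IR}^{k\times m}$, $\mathbf A^n\in\mathbb{IR}^{k\times n}$, $\mathbf B^f\in\mathbb{IR}^{\ell\times m}$, $\mathbf B^n\in\mathbb{IR}^{\ell\times n}$ and interval vectors $\mathbf a\in\mathbb{IR}^k$, $\mathbf b\in\mathbb{IR}^\ell$, $\mathbf c^f\in\mathbb{IR}^m$, $\mathbf c^n\in\mathbb{IR}^n$; $\mathcal D^p$ is the Cartesian product of these sets, and an element $s=(A^f,A^n,B^f,B^n,a,b,c^f,c^n)\in\mathcal D^p$ is a scenario. To a scenario is associated the linear program $LP(s)$: minimize $(c^f)^Tx^f+(c^n)^Tx^n$ over $x^f\in\mathbb R^m$, $x^n\in\mathbb R^n$ subject to $A^fx^f+A^nx^n=a$, $B^fx^f+B^nx^n\ge b$, $x^n\ge 0$. Thus $k$ is the number of equality constraints and $\ell$ the number of inequality constraints. A point $x=(x^f,x^n)$ is a weakly optimal solution of the ILP if there exists a scenario $s\in\mathcal D^p$ such that $x$ is an optimal solution of $LP(s)$; it is a weakly feasible solution if there exists a scenario $s\in\mathcal D^p$ such that $x$ is a feasible solution of $LP(s)$. Further notation: $e$ is the all-ones vector of suitable dimension; $M_i$ denotes the $i$th row of a (possibly interval) matrix $M$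 and $v_i$ the $i$th entry of a vector; $\overline c^n$ is the upper endpoint vector of $\mathbf c^n=[\underline c^n,\overline c^n]$; for $y\in\mathbb R^p$ and an interval matrix or vector $\mathbf M$ with $p$ rows, $\operatorname{diag}(y)\mathbf M=\{\operatorname{diag}(y)M: M\in\mathbf M\}$, where $\operatorname{diag}(y)$ is the diagonal matrix with diagonal $y$. *)

From HB Require Import structures.
From mathcomp Require Import all_boot all_order all_algebra.
Set Implicit Arguments. Unset Strict Implicit. Unset Printing Implicit Defensive.
Import Order.TTheory GRing.Theory Num.Theory.
Local Open Scope ring_scope.

(* Interval matrix [lo, hi] with lo <= hi entrywise; interval vectors are
   interval matrices with one column. *)
Record imx (R : realFieldType) (p q : nat) := IMx {
  imlo : 'M[R]_(p, q);
  imhi : 'M[R]_(p, q);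
  imlo_le_hi : forall i j, imlo i j <= imhi i j }.

Definition imem (R : realFieldType) p q (M : imx R p q) (A : 'M[R]_(p, q)) : Prop :=
  forall i j, imlo M i j <= A i j <= imhi M i j.

Definition in_diag_imx (R : realFieldType) p q (y : 'cV[R]_p) (M : imx R p q)
  (A' : 'M[R]_(p, q)) : Prop :=
  exists A, imem M A /\ A' = diag_mx y^T *m A.

Definition mx_le (R : realFieldType) p q (A B : 'M[R]_(p, q)) : Prop :=
  forall i j, A i j <= B i j.

Record ILP (R : realFieldType) (k l m n : nat) := MkILP {
  IAf : imx R k m; IAn : imx R k n; IBf : imx R l m; IBn : imx R l n;
  Ia : imx R k 1; Ib : imx R l 1; Icf : imx R m 1; Icn : imx R n 1 }.

Record scen (R : realFieldType) (k l m n : nat) := MkScen {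
  sAf : 'M[R]_(k, m); sAn : 'M[R]_(k, n); sBf : 'M[R]_(l, m); sBn : 'M[R]_(l, n);
  sa : 'cV[R]_k; sb : 'cV[R]_l; scf : 'cV[R]_m; scn : 'cV[R]_n }.

Definition in_Dp (R : realFieldType) k l m n (P : ILP R k l m n) (s : scen R k l m n) : Prop :=
  imem (IAf P) (sAf s) /\ imem (IAn P) (sAn s) /\ imem (IBf P) (sBf s) /\
  imem (IBn P) (sBn s) /\ imem (Ia P) (sa s) /\ imem (Ib P) (sb s) /\
  imem (Icf P) (scf s) /\ imem (Icn P) (scn s).

Definition lp_feasible (R : realFieldType) k l m n (s : scen R k l m n)
  (xf : 'cV[R]_m) (xn : 'cV[R]_n) : Prop :=
  [/\ sAf s *m xf + sAn s *m xn = sa s,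
      mx_le (sb s) (sBf s *m xf + sBn s *m xn) & mx_le 0 xn].

Definition lp_obj (R : realFieldType) k l m n (s : scen R k l m n)
  (xf : 'cV[R]_m) (xn : 'cV[R]_n) : R :=
  ((scf s)^T *m xf + (scn s)^T *m xn) 0 0.

Definition lp_optimal (R : realFieldType) k l m n (s : scen R k l m n)
  (xf : 'cV[R]_m) (xn : 'cV[R]_n) : Prop :=
  lp_feasible s xf xn /\
  forall xf' xn', lp_feasible s xf' xn' -> lp_obj s xf xn <= lp_obj s xf' xn'.

Definition weakly_optimal (R : realFieldType) k l m n (P : ILP R k l m n)
  (xf : 'cV[R]_m) (xn : 'cV[R]_n) : Prop :=
  exists s, in_Dp P s /\ lp_optimal s xf xn.

Definition weakly_feasible (R : realFieldType) k l m n (P : ILP R k l m n)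
  (xf : 'cV[R]_m) (xn : 'cV[R]_n) : Prop :=
  exists s, in_Dp P s /\ lp_feasible s xf xn.

Definition sign_vec (R : realFieldType) k (sigma : 'cV[R]_k) : Prop :=
  forall i, sigma i 0 = 1 \/ sigma i 0 = -1.

Definition eT (R : realFieldType) p q (M : 'M[R]_(p, q)) : 'rV[R]_q :=
  const_mx 1 *m M.

Definition testing_system (R : realFieldType) k l m n (P : ILP R k l m n)
  (xf : 'cV[R]_m) (xn : 'cV[R]_n) (sigma : 'cV[R]_k)
  (Af' : 'M[R]_(k, m)) (An' : 'M[R]_(k, n)) (a' : 'cV[R]_k)
  (Bf' : 'M[R]_(l, m)) (Bn' : 'M[R]_(l, n)) (b' : 'cV[R]_l)
  (yf : 'cV[R]_k) (yn : 'cV[R]_l) : Prop :=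
  [/\ in_diag_imx yf (IAf P) Af', in_diag_imx yf (IAn P) An' & in_diag_imx yf (Ia P) a'] /\
  [/\ in_diag_imx yn (IBf P) Bf', in_diag_imx yn (IBn P) Bn' & in_diag_imx yn (Ib P) b'] /\
  Af' *m xf + An' *m xn = a' /\ Bf' *m xf + Bn' *m xn = b' /\
   [/\ imem (Icf P) (eT Af' + eT Bf')^T,
       forall i, 0 < xn i 0 ->
         imlo (Icn P) i 0 <= (eT An' + eT Bn') 0 i <= imhi (Icn P) i 0,
       forall i, xn i 0 = 0 -> (eT An' + eT Bn') 0 i <= imhi (Icn P) i 0,
       mx_le 0 yn & mx_le 0 (diag_mx sigma^T *m yf)].

Definition witness_scen (R : realFieldType) k l m n (P : ILP R k l m n)
  (xf : 'cV[R]_m) (xn : 'cV[R]_n)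
  (Af' : 'M[R]_(k, m)) (An' : 'M[R]_(k, n)) (a' : 'cV[R]_k)
  (Bf' : 'M[R]_(l, m)) (Bn' : 'M[R]_(l, n)) (b' : 'cV[R]_l)
  (yf : 'cV[R]_k) (yn : 'cV[R]_l) (s : scen R k l m n) : Prop :=
  [/\ scf s = (eT Af' + eT Bf')^T,
      (forall i : 'I_k,
         if yf i 0 != 0 then
           [/\ row i (sAf s) = (yf i 0)^-1 *: row i Af',
               row i (sAn s) = (yf i 0)^-1 *: row i An' &
               sa s i 0 = (yf i 0)^-1 * a' i 0]
         else
           [/\ row i (sAf s) *m xf + row i (sAn s) *m xn = row i (sa s),
               (forall j, imlo (IAf P) i j <= sAf s i j <= imhi (IAf P) i j),
               (forall j, imlo (IAn P) i j <= sAn s i j <= imhi (IAn P) i j) &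
               imlo (Ia P) i 0 <= sa s i 0 <= imhi (Ia P) i 0]),
      (forall i : 'I_l,
         if 0 < yn i 0 then
           [/\ row i (sBf s) = (yn i 0)^-1 *: row i Bf',
               row i (sBn s) = (yn i 0)^-1 *: row i Bn' &
               sb s i 0 = (yn i 0)^-1 * b' i 0]
         else
           [/\ sb s i 0 <= (row i (sBf s) *m xf + row i (sBn s) *m xn) 0 0,
               (forall j, imlo (IBf P) i j <= sBf s i j <= imhi (IBf P) i j),
               (forall j, imlo (IBn P) i j <= sBn s i j <= imhi (IBn P) i j) &
               imlo (Ib P) i 0 <= sb s i 0 <= imhi (Ib P) i 0]) &
      (forall i : 'I_n,
         scn s i 0 = if xn i 0 == 0 then imhi (Icn P) i 0
                     else (eT An' + eT Bn') 0 i)].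

(* Weak optimality of x means optimality of x in LP(s) for some scenario s, which by
   Farkas' lemma (proved by eliminating one constraint at a time) is equivalent to the
   existence of Karush-Kuhn-Tucker multipliers yf, yn for LP(s) at x.  These conditions
   are bilinear in the multipliers and the scenario data; the substitution
   A' = diag(yf) A, B' = diag(yn) B, ... makes them linear, and they become the testing
   system in the orthant of the sign pattern of yf.  Conversely, a solution of the
   testing system is rescaled row by row into a scenario (rows with a zero multiplier
   are taken from a scenario in which x is feasible) for which yf, yn are KKT
   multipliers, and weak duality makes x optimal there. *)

From HB Require Import structures.
From mathcomp Require Import all_boot all_order all_algebra.
From mathcomp Require Import ring lra.
From Stdlib Require Import Classical_Prop.
Import Order.TTheory GRing.Theory Num.Theory.
Local Open Scope ring_scope.
Set Implicit Arguments. Unset Strict Implicit. Unset Printing Implicit Defensive.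

Section Farkas.
Variables (R : realFieldType) (V : lmodType R).

Lemma scalarD (f : V -> R) : scalar f -> forall u v, f (u + v) = f u + f v.
Proof. by move=> fL u v; rewrite -[u in LHS]scale1r fL mul1r. Qed.

Lemma scalarZ (f : V -> R) : scalar f -> forall a u, f (a *: u) = a * f u.
Proof.
move=> fL a u; have f0 : f 0 = 0.
  by have := scalarD fL 0 0; rewrite addr0 -{1}[f 0]addr0 => /addrI.
by rewrite -[a *: u]addr0 fL f0 addr0.
Qed.

Lemma scalar_ge0_eq0 (f : V -> R) : scalar f -> (forall x, 0 <= f x) -> forall x, f x = 0.
Proof.
move=> fL f_ge0 x; have := f_ge0 (-1 *: x); rewrite (scalarZ fL) mulN1r oppr_ge0 => fx_le0.
by apply/eqP; rewrite eq_le fx_le0 f_ge0.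
Qed.

Definition proj_ker (g0 : V -> R) (x y : V) : V := - (g0 y / g0 x) *: x + y.

Lemma proj_ker_linear (g0 : V -> R) x : scalar g0 -> linear (proj_ker g0 x).
Proof.
move=> g0L a u v; rewrite /proj_ker g0L scalerDr scalerA addrACA -scalerDl.
by congr (_ *: _ + _); ring.
Qed.

Lemma proj_kerK (g0 : V -> R) x y : scalar g0 -> g0 x != 0 -> g0 (proj_ker g0 x y) = 0.
Proof. by move=> g0L g0x_neq0; rewrite /proj_ker g0L mulNr divfK // addNr. Qed.

Lemma nneg_comb_lift p (g : 'I_p.+1 -> V -> R) (c : V -> R) (lam : 'I_p -> R) mu :
  0 <= mu -> (forall i, 0 <= lam i) ->
  (forall y, c y = mu * g ord0 y + \sum_i lam i * g (lift ord0 i) y) ->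
  exists2 lam' : 'I_p.+1 -> R,
    forall i, 0 <= lam' i & forall y, c y = \sum_i lam' i * g i y.
Proof.
move=> mu_ge0 lam_ge0 c_eq; exists (fun i => oapp lam mu (unlift ord0 i)) => [i|y].
  by case: (unliftP ord0 i) => [j _|_] /=.
rewrite big_ord_recl unlift_none; under eq_bigr => i _ do rewrite liftK.
exact: c_eq.
Qed.

Lemma farkas_ord p (g : 'I_p -> V -> R) (c : V -> R) :
  (forall i, scalar (g i)) -> scalar c ->
  (forall x, (forall i, 0 <= g i x) -> 0 <= c x) ->
  exists2 lam : 'I_p -> R, forall i, 0 <= lam i & forall x, c x = \sum_i lam i * g i x.
Proof.
elim: p g c => [|p IH] g c gL cL cone_c.
  exists (fun _ => 0) => [//|x]; rewrite big_ord0.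
  by apply: scalar_ge0_eq0 => // y; apply: cone_c => -[].
pose g0 := g ord0; pose gr i := g (lift ord0 i).
case: (classic (exists x, (forall i, 0 <= gr i x) /\ c x < 0)) => [[x [gr_ge0 cx_lt0]]|no_x].
  (* [x] violates [c] on the cone of [gr], so it must violate [g0]: eliminate [g0] by
     projecting along [x] onto its kernel. *)
  have g0x_lt0 : g0 x < 0.
    rewrite ltNge; apply/negP => g0x_ge0; move: cx_lt0; rewrite ltNge cone_c //.
    by move=> i; case: (unliftP ord0 i) => [j ->|->]; [apply: gr_ge0|].
  have g0x_neq0 : g0 x != 0 by rewrite ltr0_neq0.
  pose pi := proj_ker g0 x.
  have [lam lam_ge0 c_pi] : exists2 lam : 'I_p -> R,
      forall i, 0 <= lam i & forall y, c (pi y) = \sum_i lam i * gr i (pi y).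
    apply: (IH (fun i y => gr i (pi y)) (fun y => c (pi y))).
    - by move=> i a u v; rewrite /pi (proj_ker_linear _ (gL ord0)) /gr gL.
    - by move=> a u v; rewrite /pi (proj_ker_linear _ (gL ord0)) cL.
    - move=> y gr_pi_ge0; apply: cone_c => i.
      by case: (unliftP ord0 i) => [j ->|->]; [apply: gr_pi_ge0|rewrite proj_kerK ?gL].
  pose mu := (c x - \sum_i lam i * gr i x) / g0 x.
  apply: (@nneg_comb_lift p g c lam mu) => // [|y].
    rewrite /mu ler_ndivlMr // mul0r subr_le0 (le_trans (ltW cx_lt0)) //.
    by rewrite sumr_ge0 // => i _; rewrite mulr_ge0.
  have := c_pi y; rewrite /pi /proj_ker cL.
  under eq_bigr => i _ do rewrite /gr gL mulrDr mulrCA.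
  rewrite big_split /= -mulr_sumr => c_pi_y.
  by apply: (addrI (- (g0 y / g0 x) * c x)); rewrite c_pi_y /mu /g0 /gr /=; ring.
have [lam lam_ge0 c_eq] : exists2 lam : 'I_p -> R,
    forall i, 0 <= lam i & forall y, c y = \sum_i lam i * gr i y.
  apply: IH => // [i|y gry_ge0]; first exact: gL.
  by rewrite leNgt; apply/negP => cy_lt0; apply: no_x; exists y.
by apply: (@nneg_comb_lift p g c lam 0) => // y; rewrite mul0r add0r.
Qed.

Lemma farkas (I : finType) (g : I -> V -> R) (c : V -> R) :
  (forall i, scalar (g i)) -> scalar c ->
  (forall x, (forall i, 0 <= g i x) -> 0 <= c x) ->
  exists2 lam : I -> R, forall i, 0 <= lam i & forall x, c x = \sum_i lam i * g i x.
Proof.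
move=> gL cL cone_c.
have [lam lam_ge0 c_eq] : exists2 lam : 'I_#|I| -> R,
    forall i, 0 <= lam i & forall x, c x = \sum_i lam i * g (enum_val i) x.
  apply: farkas_ord => // x gx_ge0; apply: cone_c => i.
  by rewrite -(enum_rankK i).
exists (fun i => lam (enum_rank i)) => // x.
by rewrite c_eq (big_enum_val (A := I)) /=; apply: eq_bigr => i _; rewrite enum_valK.
Qed.

End Farkas.

Lemma ler_mulmx_nneg (R : realFieldType) p (r : 'rV[R]_p) (u v : 'cV[R]_p) :
  mx_le 0 r -> mx_le u v -> (r *m u) 0 0 <= (r *m v) 0 0.
Proof.
move=> r_ge0 le_uv; rewrite !mxE ler_sum // => i _.
by rewrite ler_wpM2l //; have := r_ge0 0 i; rewrite mxE.
Qed.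

Lemma scalar_mx_form (R : realFieldType) m n p (M1 : 'M[R]_(p, m)) (M2 : 'M[R]_(p, n))
    (v : 'cV[R]_p) i :
  scalar (fun d : 'cV[R]_m * 'cV[R]_n * R^o => (M1 *m d.1.1 + M2 *m d.1.2 - d.2 *: v) i 0).
Proof.
move=> a [[u1 u2] u3] [[w1 w2] w3] /=.
rewrite !mulmxDr -!scalemxAr scalerDl -scalerA !mxE; ring.
Qed.

Lemma trmx_mulmx00E (R : realFieldType) p (u v : 'cV[R]_p) :
  (u^T *m v) 0 0 = \sum_i u i 0 * v i 0.
Proof. by rewrite mxE; apply: eq_bigr => i _; rewrite mxE. Qed.

Section LinearProgram.
Variables (R : realFieldType) (k l m n : nat) (s : scen R k l m n).

Definition lp_kkt (xf : 'cV[R]_m) (xn : 'cV[R]_n) (yf : 'cV[R]_k) (yn : 'cV[R]_l) :=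
  [/\ mx_le 0 yn,
      (scf s)^T = yf^T *m sAf s + yn^T *m sBf s,
      mx_le (yf^T *m sAn s + yn^T *m sBn s) (scn s)^T,
      forall j, ((scn s)^T - (yf^T *m sAn s + yn^T *m sBn s)) 0 j * xn j 0 = 0 &
      forall i, yn i 0 * (sBf s *m xf + sBn s *m xn - sb s) i 0 = 0].

Lemma lp_obj_dual yf yn xf xn :
  (scf s)^T = yf^T *m sAf s + yn^T *m sBf s ->
  lp_obj s xf xn = (yf^T *m (sAf s *m xf + sAn s *m xn)
    + yn^T *m (sBf s *m xf + sBn s *m xn)
    + ((scn s)^T - (yf^T *m sAn s + yn^T *m sBn s)) *m xn) 0 0.
Proof.
move=> cf_eq; rewrite /lp_obj cf_eq mulmxBl !mulmxDr !mulmxDl !mulmxA.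
congr (_ 0 0).
set a := _ *m sAf s *m xf; set b := _ *m sBf s *m xf; set d := _ *m sAn s *m xn.
set e := _ *m sBn s *m xn.
by rewrite (addrACA a) -(addrA (a + b)) (addrC (d + e)) subrK.
Qed.

Lemma lp_kkt_optimal xf xn yf yn :
  lp_feasible s xf xn -> lp_kkt xf xn yf yn -> lp_optimal s xf xn.
Proof.
move=> feas [yn_ge0 cf_eq w_le_cn slack_n slack_B]; split => // xf' xn' [eqA' leB' xn'_ge0].
have yn_ge0T : mx_le 0 yn^T by move=> i j; have := yn_ge0 j i; rewrite !mxE.
have slackB : yn^T *m (sBf s *m xf + sBn s *m xn) = yn^T *m sb s.
  apply/eqP; rewrite -subr_eq0 -mulmxBr; apply/eqP/matrixP => i j.
  by rewrite !ord1 !mxE big1 // => r _; rewrite mxE slack_B.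
have slackn : ((scn s)^T - (yf^T *m sAn s + yn^T *m sBn s)) *m xn = 0.
  by apply/matrixP => i j; rewrite !ord1 !mxE big1.
case: feas => eqA _ _.
rewrite !(lp_obj_dual _ _ cf_eq) eqA eqA' slackB slackn addr0.
rewrite [X in X <= _]mxE [X in _ <= X]mxE [X in _ <= X + _]mxE -addrA lerD2l.
rewrite -[X in X <= _]addr0 lerD ?ler_mulmx_nneg //.
have := @ler_mulmx_nneg _ _ ((scn s)^T - (yf^T *m sAn s + yn^T *m sBn s)) 0 xn'.
rewrite mulmx0 mxE; apply=> // i j.
by have := w_le_cn i j; rewrite !mxE subr_ge0.
Qed.

(* Homogenization of optimality: recession directions ([t = 0]) and rescaled
   feasible points ([t > 0]) cannot decrease the objective. *)
Lemma lp_optimal_homogeneous xf xn df dn (t : R) :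
  lp_optimal s xf xn -> 0 <= t ->
  sAf s *m df + sAn s *m dn = t *: sa s ->
  mx_le (t *: sb s) (sBf s *m df + sBn s *m dn) -> mx_le 0 dn ->
  t * lp_obj s xf xn <= lp_obj s df dn.
Proof.
move=> [[eqA leB xn_ge0] opt] t_ge0.
have [-> eqD leD dn_ge0|t_neq0 eqD leD dn_ge0] := eqVneq t 0.
  have feas : lp_feasible s (xf + df) (xn + dn).
    split; first by rewrite !mulmxDr addrACA eqA eqD scale0r addr0.
      move=> i j; rewrite !mulmxDr addrACA mxE -[sb s i j]addr0 lerD //.
      by have := leD i j; rewrite scale0r mxE.
    move=> i j; have := xn_ge0 i j; have := dn_ge0 i j.
    by rewrite !mxE => ? ?; apply: addr_ge0.
  have := opt _ _ feas; rewrite /lp_obj !mulmxDr addrACA [X in _ <= X]mxE lerDl.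
  by rewrite mul0r.
have t_gt0 : 0 < t by rewrite lt0r t_neq0.
have feas : lp_feasible s (t^-1 *: df) (t^-1 *: dn).
  split; first by rewrite -!scalemxAr -scalerDr eqD scalerA mulVf // scale1r.
    move=> i j; rewrite -!scalemxAr -scalerDr mxE -[sb s i j]mul1r -(mulVf t_neq0) -mulrA.
    by rewrite ler_wpM2l ?invr_ge0 //; have := leD i j; rewrite mxE.
  by move=> i j; rewrite !mxE mulr_ge0 ?invr_ge0 //; have := dn_ge0 i j; rewrite mxE.
have := opt _ _ feas; rewrite /lp_obj -!scalemxAr -scalerDr [X in _ <= X]mxE.
by rewrite -(ler_pM2l t_gt0) mulrA mulfV // mul1r.
Qed.

Definition homog_constraint (c : 'I_k + 'I_k + 'I_l + 'I_n + unit)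
    (d : 'cV[R]_m * 'cV[R]_n * R^o) : R :=
  match c with
  | inl (inl (inl (inl i))) => (sAf s *m d.1.1 + sAn s *m d.1.2 - d.2 *: sa s) i 0
  | inl (inl (inl (inr i))) => - (sAf s *m d.1.1 + sAn s *m d.1.2 - d.2 *: sa s) i 0
  | inl (inl (inr i)) => (sBf s *m d.1.1 + sBn s *m d.1.2 - d.2 *: sb s) i 0
  | inl (inr j) => d.1.2 j 0
  | inr _ => d.2
  end.

Lemma homog_constraint_scalar c : scalar (homog_constraint c).
Proof.
case: c => [[[[i|i]|i]|j]|[]]; try exact: scalar_mx_form.
- move=> a u v; have := scalar_mx_form (sAf s) (sAn s) (sa s) i a u v.
  by rewrite /= => ->; ring.
- by move=> a u v; rewrite /= !mxE.
- by [].
Qed.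

Lemma homog_constraint_ge0 df dn t :
  (forall c, 0 <= homog_constraint c (df, dn, t)) ->
  [/\ 0 <= t, sAf s *m df + sAn s *m dn = t *: sa s,
      mx_le (t *: sb s) (sBf s *m df + sBn s *m dn) & mx_le 0 dn].
Proof.
move=> h_ge0; split=> [|||j i]; first exact: (h_ge0 (inr tt)).
- apply/matrixP => i j; rewrite ord1.
  have := h_ge0 (inl (inl (inl (inl i)))); have := h_ge0 (inl (inl (inl (inr i)))).
  rewrite /= !mxE; lra.
- move=> i j; rewrite ord1; have := h_ge0 (inl (inl (inr i))).
  rewrite /= !mxE; lra.
- by rewrite ord1 mxE; apply: (h_ge0 (inl (inr j))).
Qed.

Lemma lp_optimal_multipliers xf xn : lp_optimal s xf xn ->
  exists (yf : 'cV[R]_k) (yn : 'cV[R]_l) (nu : 'cV[R]_n) (tau : R),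
    [/\ mx_le 0 yn, mx_le 0 nu, 0 <= tau &
    forall df dn t, lp_obj s df dn - t * lp_obj s xf xn =
      (yf^T *m (sAf s *m df + sAn s *m dn - t *: sa s)
       + yn^T *m (sBf s *m df + sBn s *m dn - t *: sb s) + nu^T *m dn) 0 0 + tau * t].
Proof.
move=> opt.
pose c (d : 'cV[R]_m * 'cV[R]_n * R^o) := lp_obj s d.1.1 d.1.2 - d.2 * lp_obj s xf xn.
have c_scalar : scalar c.
  move=> a [[u1 u2] u3] [[v1 v2] v3]; rewrite /c /lp_obj /= !mulmxDr -!scalemxAr !mxE.
  by rewrite -[a *: u3]/(a * u3); ring.
have c_cone d : (forall i, 0 <= homog_constraint i d) -> 0 <= c d.
  case: d => [[df dn] t] /homog_constraint_ge0[t_ge0 eqD leD dn_ge0].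
  by rewrite /c /= subr_ge0; apply: lp_optimal_homogeneous.
have [lam lam_ge0 c_eq] := farkas homog_constraint_scalar c_scalar c_cone.
exists (\col_i (lam (inl (inl (inl (inl i)))) - lam (inl (inl (inl (inr i)))))).
exists (\col_i lam (inl (inl (inr i)))), (\col_j lam (inl (inr j))), (lam (inr tt)).
split=> [i j|i j||df dn t]; try by rewrite ?mxE.
have := c_eq (df, dn, t); rewrite /c /= => ->.
rewrite !big_sumType (big_pred1 tt) //= [in RHS]mxE [in RHS]mxE !trmx_mulmx00E.
congr (_ + _ + _ + _); try by apply: eq_bigr => i _; rewrite [in RHS]mxE.
by rewrite -big_split; apply: eq_bigr => i _; rewrite [in RHS]mxE /=; ring.
Qed.

Lemma lp_optimal_kkt xf xn :
  lp_optimal s xf xn -> exists yf yn, lp_kkt xf xn yf yn.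
Proof.
move=> opt; have [[eqA leB xn_ge0] _] := opt.
have [yf [yn [nu [tau [yn_ge0 nu_ge0 tau_ge0 E]]]]] := lp_optimal_multipliers opt.
exists yf, yn.
have slack : (forall i, yn i 0 * (sBf s *m xf + sBn s *m xn - sb s) i 0 = 0)
    /\ (forall j, nu j 0 * xn j 0 = 0).
  have yn_slack_ge0 i : 0 <= yn i 0 * (sBf s *m xf + sBn s *m xn - sb s) i 0.
    by apply: mulr_ge0; [have := yn_ge0 i 0 | have := leB i 0]; rewrite !mxE // subr_ge0.
  have nu_xn_ge0 j : 0 <= nu j 0 * xn j 0.
    by have := nu_ge0 j 0; have := xn_ge0 j 0; rewrite !mxE => ? ?; apply: mulr_ge0.
  have := E xf xn 1; rewrite mul1r subrr !scale1r eqA subrr mulmx0 add0r mxE !trmx_mulmx00E.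
  move/esym/eqP; rewrite mulr1 !paddr_eq0 ?addr_ge0 ?sumr_ge0 //.
  move=> /andP[/andP[/eqP yn_slack0 /eqP nu_xn0] _].
  by split=> [i|j]; [apply: (psumr_eq0P _ yn_slack0) | apply: (psumr_eq0P _ nu_xn0)].
have cf_eq : (scf s)^T = yf^T *m sAf s + yn^T *m sBf s.
  apply/rowP => j; have := E (delta_mx j 0) 0 0.
  rewrite /lp_obj !mulmx0 !addr0 mul0r !scale0r !subr0 mulr0 addr0 !mulmxA -!colE -linearD.
  by move/eqP; rewrite !mxE => /eqP.
have cn_eq : (scn s)^T - (yf^T *m sAn s + yn^T *m sBn s) = nu^T.
  apply/rowP => j; have := E 0 (delta_mx j 0) 0.
  rewrite /lp_obj !mulmx0 !add0r mul0r !scale0r !subr0 mulr0 addr0 !mulmxA -!colE -!linearD.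
  by rewrite !mxE; lra.
split=> //.
- move=> i j; have := nu_ge0 j i; have := congr1 (fun M : 'rV_n => M i j) cn_eq.
  by rewrite !mxE; lra.
- by move=> j; rewrite cn_eq mxE; apply: slack.2.
- exact: slack.1.
Qed.

End LinearProgram.

Section DiagScaling.
Variables (R : realFieldType) (p q : nat).
Implicit Types (y : 'cV[R]_p) (A S : 'M[R]_(p, q)).

Lemma diag_mulmxE y A i j : (diag_mx y^T *m A) i j = y i 0 * A i j.
Proof. by rewrite mul_diag_mx !mxE. Qed.

Lemma eT_diag_mulmx y A : eT (diag_mx y^T *m A) = y^T *m A.
Proof.
by rewrite /eT mulmxA mul_mx_diag; congr (_ *m _); apply/rowP => i; rewrite !mxE mul1r.
Qed.

Lemma in_diag_imx_factor y (M : imx R p q) A' S :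
  in_diag_imx y M A' ->
  (forall i, y i 0 != 0 -> row i S = (y i 0)^-1 *: row i A') ->
  (forall i, y i 0 = 0 -> forall j, imlo M i j <= S i j <= imhi M i j) ->
  A' = diag_mx y^T *m S /\ imem M S.
Proof.
move=> [A [memA ->]] S_nz S_z.
have SE i j : y i 0 != 0 -> S i j = A i j.
  move=> ny0; move/rowP/(_ j): (S_nz i ny0).
  by rewrite mxE [RHS]mxE [in RHS]mxE diag_mulmxE mulKf.
split=> [|i j]; last by have [/S_z|/SE ->] := eqVneq (y i 0) 0.
apply/matrixP => i j; rewrite !diag_mulmxE.
by have [->|/SE ->] := eqVneq (y i 0) 0; rewrite ?mul0r.
Qed.

End DiagScaling.

Section IntervalLP.
Variables (R : realFieldType) (k l m n : nat) (P : ILP R k l m n).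
Variables (xf : 'cV[R]_m) (xn : 'cV[R]_n).

Lemma kkt_testing_system (s : scen R k l m n) yf yn :
  in_Dp P s -> sAf s *m xf + sAn s *m xn = sa s -> lp_kkt s xf xn yf yn ->
  exists2 sigma, sign_vec sigma &
    testing_system P xf xn sigma
      (diag_mx yf^T *m sAf s) (diag_mx yf^T *m sAn s) (diag_mx yf^T *m sa s)
      (diag_mx yn^T *m sBf s) (diag_mx yn^T *m sBn s) (diag_mx yn^T *m sb s) yf yn.
Proof.
move=> [mAf [mAn [mBf [mBn [ma [mb [mcf mcn]]]]]]] eqA.
move=> [yn_ge0 cf_eq w_le_cn slack_n slack_B].
exists (\col_i (if 0 <= yf i 0 then 1 else -1)).
  by move=> i; rewrite mxE; case: ifP => _; [left|right].
split; first by split; [exists (sAf s)|exists (sAn s)|exists (sa s)].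
split; first by split; [exists (sBf s)|exists (sBn s)|exists (sb s)].
split; first by rewrite -!mulmxA -mulmxDr eqA.
split.
  apply/matrixP => i j; rewrite ord1 -!mulmxA -mulmxDr !diag_mulmxE.
  by have := slack_B i; rewrite !mxE mulrBr => /eqP; rewrite subr_eq0 => /eqP.
rewrite !eT_diag_mulmx; split=> //.
- by rewrite -cf_eq trmxK.
- move=> j xn_gt0; have := mcn j 0; have := slack_n j.
  move/eqP; rewrite mulf_eq0 (gt_eqF xn_gt0) orbF.
  by rewrite !mxE => /eqP w_eq /andP[lo hi]; apply/andP; split; lra.
- by move=> j _; apply: le_trans (w_le_cn 0 j) _; have /andP[] := mcn j 0; rewrite mxE.
- move=> i j; rewrite ord1 diag_mulmxE !mxE.
  by case: ifP => [|/negbT]; rewrite ?mul1r // -ltNge mulN1r oppr_ge0 => /ltW.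
Qed.

Lemma witness_scen_exists Af' An' a' Bf' Bn' b' yf yn :
  weakly_feasible P xf xn ->
  exists s, witness_scen P xf xn Af' An' a' Bf' Bn' b' yf yn s.
Proof.
move=> [s0 [[mAf [mAn [mBf [mBn [ma [mb _]]]]]] [eqA leB _]]].
pose rescale p q (b : pred 'I_p) (y : 'cV[R]_p) (M' M0 : 'M[R]_(p, q)) :=
  \matrix_(i, j) if b i then (y i 0)^-1 * M' i j else M0 i j.
have row_rescale p q b y M' M0 i : row i (rescale p q b y M' M0) =
    if b i then (y i 0)^-1 *: row i M' else row i M0.
  by apply/rowP => j; rewrite !mxE; case: (b i); rewrite !mxE.
have rescaleE p q b y M' M0 i j : rescale p q b y M' M0 i j =
    if b i then (y i 0)^-1 * M' i j else M0 i j by rewrite mxE.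
pose nzf i := yf i 0 != 0; pose pzn i := 0 < yn i 0.
exists (MkScen (rescale _ _ nzf yf Af' (sAf s0)) (rescale _ _ nzf yf An' (sAn s0))
  (rescale _ _ pzn yn Bf' (sBf s0)) (rescale _ _ pzn yn Bn' (sBn s0))
  (rescale _ _ nzf yf a' (sa s0)) (rescale _ _ pzn yn b' (sb s0))
  (eT Af' + eT Bf')^T
  (\col_i (if xn i 0 == 0 then imhi (Icn P) i 0 else (eT An' + eT Bn') 0 i))).
split=> [//|i|i|i]; last by rewrite mxE.
all: rewrite /= !row_rescale ?rescaleE /nzf /pzn; case: ifP => h; rewrite ?h.
- by [].
- split; first by rewrite !rowE -!mulmxA -mulmxDr eqA.
  + by move=> j; rewrite rescaleE h; apply: mAf.
  + by move=> j; rewrite rescaleE h; apply: mAn.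
  + exact: ma.
- by [].
- split; [|move=> j; rewrite rescaleE h..|exact: mb].
  + by rewrite !rowE -!mulmxA -mulmxDr -rowE mxE; apply: leB.
  + exact: mBf.
  + exact: mBn.
Qed.

Lemma witness_scen_rescaled sigma Af' An' a' Bf' Bn' b' yf yn s :
  mx_le 0 xn ->
  testing_system P xf xn sigma Af' An' a' Bf' Bn' b' yf yn ->
  witness_scen P xf xn Af' An' a' Bf' Bn' b' yf yn s ->
  [/\ in_Dp P s,
      [/\ Af' = diag_mx yf^T *m sAf s, An' = diag_mx yf^T *m sAn s
         & a' = diag_mx yf^T *m sa s] &
      [/\ Bf' = diag_mx yn^T *m sBf s, Bn' = diag_mx yn^T *m sBn s
         & b' = diag_mx yn^T *m sb s]].
Proof.
move=> xn_ge0 [[TAf TAn Ta] [[TBf TBn Tb] [_ [_ [Tcf Tcn_pos _ yn_ge0 _]]]]].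
move=> [cf_eq WA WB cn_eq].
have WA_nz i : yf i 0 != 0 -> [/\ row i (sAf s) = (yf i 0)^-1 *: row i Af',
    row i (sAn s) = (yf i 0)^-1 *: row i An' & row i (sa s) = (yf i 0)^-1 *: row i a'].
  move=> nz; have := WA i; rewrite nz => -[? ? ea]; split=> //.
  by apply/rowP => j; rewrite ord1 !mxE.
have WA_z i : yf i 0 = 0 -> [/\ forall j, imlo (IAf P) i j <= sAf s i j <= imhi (IAf P) i j,
    forall j, imlo (IAn P) i j <= sAn s i j <= imhi (IAn P) i j &
    forall j, imlo (Ia P) i j <= sa s i j <= imhi (Ia P) i j].
  by move=> z; have := WA i; rewrite z eqxx => -[_ ? ? ?]; split=> // j; rewrite ord1.
have yn_pos i : (0 < yn i 0) = (yn i 0 != 0).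
  by rewrite lt0r andbC; have := yn_ge0 i 0; rewrite mxE => ->.
have WB_nz i : yn i 0 != 0 -> [/\ row i (sBf s) = (yn i 0)^-1 *: row i Bf',
    row i (sBn s) = (yn i 0)^-1 *: row i Bn' & row i (sb s) = (yn i 0)^-1 *: row i b'].
  move=> nz; have := WB i; rewrite yn_pos nz => -[? ? eb]; split=> //.
  by apply/rowP => j; rewrite ord1 !mxE.
have WB_z i : yn i 0 = 0 -> [/\ forall j, imlo (IBf P) i j <= sBf s i j <= imhi (IBf P) i j,
    forall j, imlo (IBn P) i j <= sBn s i j <= imhi (IBn P) i j &
    forall j, imlo (Ib P) i j <= sb s i j <= imhi (Ib P) i j].
  move=> z; have := WB i; rewrite yn_pos z eqxx => -[_ ? ? ?].
  by split=> // j; rewrite ord1.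
have [eAf mAf] : Af' = diag_mx yf^T *m sAf s /\ imem (IAf P) (sAf s).
  by apply: in_diag_imx_factor TAf _ _ => i; [case/WA_nz | case/WA_z].
have [eAn mAn] : An' = diag_mx yf^T *m sAn s /\ imem (IAn P) (sAn s).
  by apply: in_diag_imx_factor TAn _ _ => i; [case/WA_nz | case/WA_z].
have [ea ma] : a' = diag_mx yf^T *m sa s /\ imem (Ia P) (sa s).
  by apply: in_diag_imx_factor Ta _ _ => i; [case/WA_nz | case/WA_z].
have [eBf mBf] : Bf' = diag_mx yn^T *m sBf s /\ imem (IBf P) (sBf s).
  by apply: in_diag_imx_factor TBf _ _ => i; [case/WB_nz | case/WB_z].
have [eBn mBn] : Bn' = diag_mx yn^T *m sBn s /\ imem (IBn P) (sBn s).
  by apply: in_diag_imx_factor TBn _ _ => i; [case/WB_nz | case/WB_z].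
have [eb mb] : b' = diag_mx yn^T *m sb s /\ imem (Ib P) (sb s).
  by apply: in_diag_imx_factor Tb _ _ => i; [case/WB_nz | case/WB_z].
split=> //; do 7 (split=> //); first by rewrite cf_eq.
move=> j i; rewrite ord1 cn_eq; case: eqP => [_|xn_neq0]; first by rewrite imlo_le_hi lexx.
apply: Tcn_pos; rewrite lt0r; apply/andP; split; first exact/eqP.
by have := xn_ge0 j 0; rewrite mxE.
Qed.

Lemma witness_scen_optimal sigma Af' An' a' Bf' Bn' b' yf yn s :
  mx_le 0 xn ->
  testing_system P xf xn sigma Af' An' a' Bf' Bn' b' yf yn ->
  witness_scen P xf xn Af' An' a' Bf' Bn' b' yf yn s ->
  in_Dp P s /\ lp_optimal s xf xn.
Proof.
move=> xn_ge0 T W; have [Dp [eAf eAn ea] [eBf eBn eb]] := witness_scen_rescaled xn_ge0 T W.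
move: T W => [_ [_ [EA [EB [_ _ Tcn0 yn_ge0 _]]]]] [cf_eq WA WB cn_eq].
have diagA : diag_mx yf^T *m (sAf s *m xf + sAn s *m xn) = diag_mx yf^T *m sa s.
  by rewrite mulmxDr !mulmxA -eAf -eAn -ea.
have diagB : diag_mx yn^T *m (sBf s *m xf + sBn s *m xn) = diag_mx yn^T *m sb s.
  by rewrite mulmxDr !mulmxA -eBf -eBn -eb.
have w_eq : eT An' + eT Bn' = yf^T *m sAn s + yn^T *m sBn s.
  by rewrite eAn eBn !eT_diag_mulmx.
split=> //; apply: (@lp_kkt_optimal _ _ _ _ _ s xf xn yf yn).
  split=> // [|i j].
    apply/matrixP => i j; rewrite ord1; have [z|nz] := eqVneq (yf i 0) 0.
      have := WA i; rewrite z eqxx => -[+ _ _ _].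
      by rewrite !rowE -!mulmxA -mulmxDr -!rowE => /rowP/(_ 0); rewrite !mxE.
    by have := congr1 (fun M : 'cV_k => M i 0) diagA; rewrite !diag_mulmxE => /(mulfI nz).
  rewrite ord1; have [z|nz] := eqVneq (yn i 0) 0.
    have := WB i; rewrite z ltxx => -[+ _ _ _].
    by rewrite !rowE -!mulmxA -mulmxDr -rowE mxE.
  by have := congr1 (fun M : 'cV_l => M i 0) diagB; rewrite !diag_mulmxE => /(mulfI nz) ->.
split=> // [|i j|j|i].
- by rewrite cf_eq trmxK eAf eBf !eT_diag_mulmx.
- rewrite ord1 -w_eq [X in _ <= X]mxE cn_eq.
  by case: eqP => [/Tcn0|_].
- rewrite -w_eq !mxE cn_eq; case: eqP => [->|_]; first by rewrite mulr0.
  by rewrite !mxE subrr mul0r.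
- have := congr1 (fun M : 'cV_l => M i 0) diagB.
  by rewrite !diag_mulmxE !mxE mulrBr => ->; rewrite subrr.
Qed.

End IntervalLP.

Theorem mainTheorem4 (R : realFieldType) (k l m n : nat) (P : ILP R k l m n)
  (xf : 'cV[R]_m) (xn : 'cV[R]_n) :
  (weakly_optimal P xf xn <->
     weakly_feasible P xf xn /\
     exists sigma : 'cV[R]_k, sign_vec sigma /\
       exists Af' An' a' Bf' Bn' b' yf yn,
         testing_system P xf xn sigma Af' An' a' Bf' Bn' b' yf yn) /\
  (forall (sigma : 'cV[R]_k) Af' An' a' Bf' Bn' b' yf yn,
     weakly_feasible P xf xn -> sign_vec sigma ->
     testing_system P xf xn sigma Af' An' a' Bf' Bn' b' yf yn ->
     (exists s, witness_scen P xf xn Af' An' a' Bf' Bn' b' yf yn s) /\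
     (forall s, witness_scen P xf xn Af' An' a' Bf' Bn' b' yf yn s ->
        in_Dp P s /\ lp_optimal s xf xn)).
Proof.
have witness_optimal sigma Af' An' a' Bf' Bn' b' yf yn s :
    weakly_feasible P xf xn ->
    testing_system P xf xn sigma Af' An' a' Bf' Bn' b' yf yn ->
    witness_scen P xf xn Af' An' a' Bf' Bn' b' yf yn s ->
    in_Dp P s /\ lp_optimal s xf xn.
  by move=> [s0 [_ [_ _ xn_ge0]]]; apply: witness_scen_optimal.
split; [split|].
- move=> [s [Dp opt]]; have [[eqA _ _] _] := opt.
  split; first by exists s; split=> //; case: opt.
  have [yf [yn kkt]] := lp_optimal_kkt opt.
  have [sigma sign_sigma T] := kkt_testing_system Dp eqA kkt.
  by exists sigma; split=> //; do 8 eexists; exact: T.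
- move=> [wf [sigma [_ [Af' [An' [a' [Bf' [Bn' [b' [yf [yn T]]]]]]]]]]].
  have [s W] := witness_scen_exists Af' An' a' Bf' Bn' b' yf yn wf.
  by exists s; exact: witness_optimal wf T W.
- move=> sigma Af' An' a' Bf' Bn' b' yf yn wf _ T.
  split; first exact: witness_scen_exists.
  by move=> s W; exact: witness_optimal wf T W.
Qed.
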